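(* Let $G=S_n$ and $H=S_a\wr S_a$ (the stabiliser of a partition of $\{1,\dots,n\}$ into $a$ blocks of size $a$), where $n=a^2$ and $a\geqslant 3$. Then $b(G,H)=3$.
   Context: For a subgroup $H\leqslant G$, $H_G=\bigcap_{g\in G}H^g$ is the core of $H$, and $b(G,H)=\min\{|S| : S\subseteq G,\ \bigcap_{g\in S}H^g=H_G\}$. Equivalently here, $b(G,H)$ is the minimal number of partitions of $\{1,\dots,n\}$ into $a$ parts of size $a$ whose common stabiliser in $S_n$ is trivial. *)

From mathcomp Require Import all_boot all_fingroup.
Set Implicit Arguments. Unset Strict Implicit. Unset Printing Implicit Defensive.


Definition core (gT : finGroupType) (G H : {set gT}) : {set gT} :=
  \bigcap_(g in G) (H :^ g)%g.

(* b(G,H) = min { |S| : S \subset G, \bigcap_{g in S} H^g = H_G }.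
   The minimum is taken over a nonempty family (S = G qualifies),
   and #|G| is an upper bound, so it is the default of the min. *)
Definition base_size (gT : finGroupType) (G H : {set gT}) : nat :=
  \big[minn/#|G|]_(S : {set gT} | (S \subset G) &&
                     ((\bigcap_(g in S) (H :^ g)%g) == core G H)) #|S|.

Definition block_partition (a : nat) : {set {set 'I_(a ^ 2)}} :=
  [set [set i : 'I_(a ^ 2) | i %/ a == k] | k : 'I_a].

Definition wreath_stab (a : nat) : {set {perm 'I_(a ^ 2)}} :=
  [set s : {perm 'I_(a ^ 2)} |
     [set (s @: B) | B : {set 'I_(a ^ 2)} in block_partition a] == block_partition a].

From mathcomp Require Import all_boot all_fingroup zify.
Set Implicit Arguments. Unset Strict Implicit. Unset Printing Implicit Defensive.

(* Proposition: for a >= 3, the base size of S_(a^2) acting on the cosets of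
   H = S_a wr S_a (the stabiliser of the partition of 'I_(a^2) into the a
   rows of an a x a grid) is 3.
   A conjugate H^g is the stabiliser of the partition into the fibres of the
   "labelling" z |-> row (g^-1 z); so we study permutations preserving the
   fibres of several labellings.
   - Lower bound: two labellings by a-element sets on a^2 points are never
     rigid.  Either two points carry the same pair of labels, and their
     transposition preserves both, or the pair of labels is a bijection onto
     'I_a * 'I_a, and swapping two fibres of the first labelling along the
     second one preserves both.  Hence any two conjugates of H meet
     nontrivially.
   - Upper bound: the rows, the columns, and the labels of a perturbed cyclic
     Latin square [latin] are the labellings of three conjugates of H.  A
     permutation preserving rows and columns is (i, j) |-> (sigma i, tau j);
     if it also preserves the Latin-square classes then sigma = tau = id,
     since [latin] has a unique cell whose label repeats both in its row and
     in its column, from which the identity propagates. *)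

Lemma bigmin_le (I : finType) (P : pred I) (F : I -> nat) x0 j :
  P j -> \big[minn/x0]_(i | P i) F i <= F j.
Proof.
move=> Pj; have : j \in index_enum I by rewrite mem_index_enum.
elim: (index_enum I) => [|h t IH] //; rewrite big_cons inE => /orP [/eqP <- | jt].
- by rewrite Pj geq_minl.
- case: ifP => _; last exact: IH jt. by rewrite geq_min IH ?orbT.
Qed.

Lemma base_sizeE (gT : finGroupType) (G H S : {set gT}) :
  S \subset G ->
  \bigcap_(g in S) (H :^ g)%g = core G H ->
  (forall S' : {set gT}, S' \subset G -> \bigcap_(g in S') (H :^ g)%g = core G H ->
     #|S| <= #|S'|) ->
  base_size G H = #|S|.
Proof.
move=> sSG capS minS; apply/eqP; rewrite eqn_leq; apply/andP; split.
  by apply: bigmin_le; rewrite sSG capS eqxx.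
apply: (big_ind (fun m => #|S| <= m)); first exact: subset_leq_card.
  by move=> m n hm hn; rewrite leq_min hm hn.
by move=> S' /andP [sS'G /eqP capS']; apply: minS.
Qed.

Lemma core_sub_cap (gT : finGroupType) (G H S : {set gT}) :
  S \subset G -> core G H \subset \bigcap_(g in S) (H :^ g)%g.
Proof. by move=> sSG; apply/bigcapsP=> g gS; apply: bigcap_inf; exact: (subsetP sSG). Qed.

Lemma subset_pair (T : finType) (S : {set T}) (x0 : T) : #|S| <= 2 ->
  S \subset [set nth x0 (enum S) 0; nth x0 (enum S) 1].
Proof.
move=> small; apply/subsetP=> x xS; rewrite !inE.
have xe : x \in enum S by rewrite mem_enum.
have : index x (enum S) < 2 by rewrite (leq_trans _ small) // cardE index_mem.
move: (nth_index x0 xe); case: (index x _) => [|[|n]] // <- _.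
all: by rewrite eqxx ?orbT.
Qed.

Lemma base_size_ge3 (gT : finGroupType) (G H S : {set gT}) :
  core G H = [set 1%g] ->
  (forall g1 g2, exists2 s, s != 1%g & (s \in (H :^ g1)%g) && (s \in (H :^ g2)%g)) ->
  \bigcap_(g in S) (H :^ g)%g = core G H -> 3 <= #|S|.
Proof.
move=> core1 meet2 capS; rewrite leqNgt; apply/negP => /(subset_pair 1%g) sS.
have [s ns /andP [s1 s2]] := meet2 (nth 1%g (enum S) 0) (nth 1%g (enum S) 1).
suff : s \in core G H by rewrite core1 inE (negbTE ns).
rewrite -capS; apply/bigcapP=> g /(subsetP sS).
by rewrite !inE => /orP [] /eqP ->.
Qed.

Section Labellings.
Variable T : finType.

Definition preserves (I : eqType) (k : T -> I) (s : {perm T}) : Prop :=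
  forall x y, (k (s x) == k (s y)) = (k x == k y).

Lemma preserves_relabel (I : eqType) (k : T -> I) (f : I -> I) (s : {perm T}) :
  injective f -> (forall z, k (s z) = f (k z)) -> preserves k s.
Proof. by move=> f_inj ks x y; rewrite !ks (inj_eq f_inj). Qed.

Lemma preserves1 (I : eqType) (k : T -> I) : preserves k 1%g.
Proof. by move=> x y; rewrite !perm1. Qed.

Lemma preserves_tperm (I : eqType) (k : T -> I) (x y : T) :
  k x = k y -> preserves k (tperm x y).
Proof.
move=> kxy; apply: (@preserves_relabel _ _ id) => // z.
by case: tpermP => // ->.
Qed.

Lemma mem_conj_stab (H : {set {perm T}}) (I : eqType) (k : T -> I) :
  (forall s, s \in H <-> preserves k s) ->
  forall g s, s \in (H :^ g)%g <-> preserves (fun z => k ((g^-1)%g z)) s.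
Proof.
move=> memH g s; rewrite mem_conjg memH; split=> pres x y.
- by have := pres ((g^-1)%g x) ((g^-1)%g y); rewrite conjgE invgK !permM !permKV.
- by rewrite conjgE invgK !permM pres !permK.
Qed.

(* When the pair of labels is a bijection T ~ I1 * I2, exchanging two fibres
   of k1 along k2 is a nontrivial permutation preserving both labellings. *)
Lemma swap_fibres (I1 I2 : finType) (k1 : T -> I1) (k2 : T -> I2) :
  bijective (fun z => (k1 z, k2 z)) -> 1 < #|I1| -> 0 < #|I2| ->
  exists2 s : {perm T}, s != 1%g & preserves k1 s /\ preserves k2 s.
Proof.
case=> G FG GF /card_gt1P [u [v [_ _ nuv]]] /card_gt0P [w _].
pose h z := G (tperm u v (k1 z), k2 z).
have k1h z : k1 (h z) = tperm u v (k1 z) by exact: (congr1 fst (GF _)).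
have k2h z : k2 (h z) = k2 z by exact: (congr1 snd (GF _)).
have h_inj : injective h.
  move=> x y hxy; apply: (can_inj FG); congr (_, _).
    by apply: (@perm_inj _ (tperm u v)); rewrite -!k1h hxy.
  by rewrite -k2h hxy k2h.
exists (perm h_inj); last first.
  split.
    apply: (@preserves_relabel _ _ (tperm u v)); first exact: perm_inj.
    by move=> z; rewrite permE k1h.
  by apply: (@preserves_relabel _ _ id) => // z; rewrite permE k2h.
apply/eqP=> /(congr1 (fun s : {perm T} => k1 (s (G (u, w))))).
rewrite permE k1h perm1.
have -> : k1 (G (u, w)) = u by exact: (congr1 fst (GF _)).
by rewrite tpermL; apply/eqP; rewrite eq_sym.
Qed.

Lemma two_labellings_not_rigid (I1 I2 : finType) (k1 : T -> I1) (k2 : T -> I2) :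
  #|I1| * #|I2| <= #|T| -> 1 < #|I1| -> 0 < #|I2| ->
  exists2 s : {perm T}, s != 1%g & preserves k1 s /\ preserves k2 s.
Proof.
move=> cardT I1_gt1 I2_gt0.
have [inj_pair | /injectivePn [x [y nxy /pair_equal_spec [e1 e2]]]] :=
  altP (injectiveP (fun z => (k1 z, k2 z))).
  by apply: swap_fibres => //; apply: inj_card_bij; rewrite // card_prod.
exists (tperm x y); last by split; apply: preserves_tperm.
apply/eqP=> /(congr1 (fun s : {perm T} => s x)); rewrite tpermL perm1.
by move/eqP; rewrite eq_sym (negbTE nxy).
Qed.

End Labellings.

(* The third partition: the label classes of an a x a array, indexed by nat
   so that its combinatorial properties are decided by linear arithmetic
   after case analysis. *)
Section LatinSquare.
Variable a : nat.
Hypothesis a_gt2 : 2 < a.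

Definition cyclic_latin (i j : nat) : nat := if i + j < a then i + j else i + j - a.

(* The swaps destroy its symmetries: (0,2) becomes the only
   cell whose label repeats both in its row (at (0,0)) and in its column (at
   (a-1,2)). *)
Definition latin (i j : nat) : nat :=
  if i == 0 then
    (if j == 0 then 1 else if j == 1 then 2 else if j == 2 then 1 else cyclic_latin 0 j)
  else if (i == 1) && (j == 0) then 0 else cyclic_latin i j.

Ltac latin_cases :=
  rewrite /latin /cyclic_latin; repeat (case: ifP => /= ?); lia.

Lemma latin_anchor i j i' j' : i < a -> j < a -> i' < a -> j' < a ->
  j' != j -> latin i j' = latin i j -> i' != i -> latin i' j = latin i j ->
  (i == 0) && (j == 2).
Proof. latin_cases. Qed.

Lemma latin_row0_repeat j : j < a -> j != 2 -> latin 0 j = latin 0 2 -> j = 0.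
Proof. latin_cases. Qed.

Lemma latin_col_repeat j i : j < a -> i < a -> j != 2 -> i != 0 ->
  latin i j = latin 0 j -> j = 1.
Proof. latin_cases. Qed.

Lemma latin_col1_repeat i : i < a -> i != 0 -> latin i 1 = latin 0 1 -> i = 1.
Proof. latin_cases. Qed.

Lemma latin_shift i : 1 <= i -> i.+1 < a -> latin i.+1 0 = latin i 1.
Proof. latin_cases. Qed.

Lemma latin_shift_unique k i : k < a -> 1 <= i -> i.+1 < a ->
  latin k 0 = latin i 1 -> k = i.+1.
Proof. latin_cases. Qed.

Lemma latin_col0_onto j : j < a -> exists2 k, k < a & latin k 0 = latin 2 j.
Proof.
move=> lt_j; case: (ltnP (2 + j) a) => [lt_2j | ge_2j]; first by exists (2 + j); latin_cases.
case: (eqVneq (2 + j - a) 0) => [e0 | ne0]; first by exists 1; latin_cases.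
case: (eqVneq (2 + j - a) 1) => [e1 | ne1]; first by exists 0; latin_cases.
by exists (2 + j - a); latin_cases.
Qed.

Lemma latin_row2_inj j j' : j < a -> j' < a -> latin 2 j = latin 2 j' -> j = j'.
Proof. latin_cases. Qed.

Lemma latin_00_02 : latin 0 0 = latin 0 2. Proof. latin_cases. Qed.
Lemma latin_last2_02 : latin a.-1 2 = latin 0 2. Proof. latin_cases. Qed.
Lemma latin_11_01 : latin 1 1 = latin 0 1. Proof. latin_cases. Qed.

Section Rigidity.
Variables s t : nat -> nat.
Hypothesis s_lt : forall i, i < a -> s i < a.
Hypothesis t_lt : forall j, j < a -> t j < a.
Hypothesis s_inj : forall i i', i < a -> i' < a -> s i = s i' -> i = i'.
Hypothesis t_inj : forall j j', j < a -> j' < a -> t j = t j' -> j = j'.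
Hypothesis st_latin : forall i j i' j', i < a -> j < a -> i' < a -> j' < a ->
  latin i j = latin i' j' -> latin (s i) (t j) = latin (s i') (t j').

Let lt0a : 0 < a. Proof. lia. Qed.
Let lt1a : 1 < a. Proof. lia. Qed.
Let ltla : a.-1 < a. Proof. lia. Qed.

Lemma rigid_anchor : s 0 = 0 /\ t 2 = 2.
Proof.
have t02 : t 0 != t 2 by apply/eqP=> /(t_inj lt0a a_gt2).
have sl0 : s a.-1 != s 0 by apply/eqP=> /(s_inj ltla lt0a); lia.
have := latin_anchor (s_lt lt0a) (t_lt a_gt2) (s_lt ltla) (t_lt lt0a) t02
  (st_latin lt0a lt0a lt0a a_gt2 latin_00_02) sl0
  (st_latin ltla a_gt2 lt0a a_gt2 latin_last2_02).
by case/andP=> /eqP -> /eqP ->.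
Qed.

Lemma rigid_corner : [/\ t 0 = 0, t 1 = 1 & s 1 = 1].
Proof.
have [s0 t2] := rigid_anchor.
have t0 : t 0 = 0.
  apply: latin_row0_repeat; first exact: t_lt.
    by apply/eqP=> e; have := t_inj lt0a a_gt2 (etrans e (esym t2)).
  by have := st_latin lt0a lt0a lt0a a_gt2 latin_00_02; rewrite s0 t2.
have t1 : t 1 = 1.
  apply: (@latin_col_repeat (t 1) (s 1)); [exact: t_lt | exact: s_lt | | | ].
  - by apply/eqP=> e; have := t_inj lt1a a_gt2 (etrans e (esym t2)).
  - by apply/eqP=> e; have := s_inj lt1a lt0a (etrans e (esym s0)).
  - by have := st_latin lt1a lt1a lt0a lt1a latin_11_01; rewrite s0.
split=> //; apply: latin_col1_repeat; first exact: s_lt.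
  by apply/eqP=> e; have := s_inj lt1a lt0a (etrans e (esym s0)).
by have := st_latin lt1a lt1a lt0a lt1a latin_11_01; rewrite s0 t1.
Qed.

Lemma rigid_rows i : i < a -> s i = i.
Proof.
have [s0 _] := rigid_anchor; have [t0 t1 s1] := rigid_corner.
elim: i => [|[|i] IH] lt_i //.
have lt_i1 : i.+1 < a by lia.
apply: latin_shift_unique => //; first exact: s_lt.
have := st_latin lt_i lt0a lt_i1 lt1a (latin_shift (ltn0Sn _) lt_i).
by rewrite t0 t1 IH.
Qed.

(* Every column is fixed, by comparing row 2 with column 0. *)
Lemma rigid_cols j : j < a -> t j = j.
Proof.
move=> lt_j; have [t0 _ _] := rigid_corner.
have [k lt_k ek] := latin_col0_onto lt_j.
apply: latin_row2_inj => //; first exact: t_lt.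
have := st_latin a_gt2 lt_j lt_k lt0a (esym ek).
by rewrite (rigid_rows a_gt2) (rigid_rows lt_k) t0 ek.
Qed.

End Rigidity.

End LatinSquare.

(* The points 'I_(a^2) as the cells of an a x a grid. *)
Section Grid.
Variable a : nat.
Hypothesis a_gt0 : 0 < a.

Lemma row_subproof (x : 'I_(a ^ 2)) : x %/ a < a.
Proof. by rewrite ltn_divLR // -expnSr ltn_ord. Qed.

Definition row (x : 'I_(a ^ 2)) : 'I_a := Ordinal (row_subproof x).
Definition col (x : 'I_(a ^ 2)) : 'I_a := Ordinal (ltn_pmod x a_gt0).

Lemma cell_subproof (i j : 'I_a) : i * a + j < a ^ 2.
Proof.
have := ltn_ord i; have := ltn_ord j; rewrite -mulnn => lt_j lt_i.
by rewrite (leq_trans (_ : _ < i * a + a)) ?ltn_add2l // -mulSnr leq_mul2r lt_i orbT.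
Qed.

Definition cell (i j : 'I_a) : 'I_(a ^ 2) := Ordinal (cell_subproof i j).

Lemma row_cell i j : row (cell i j) = i.
Proof. by apply: val_inj; rewrite /= divnMDl // divn_small // addn0. Qed.

Lemma col_cell i j : col (cell i j) = j.
Proof. by apply: val_inj; rewrite /= modnMDl modn_small. Qed.

Lemma cellK x : cell (row x) (col x) = x.
Proof. by apply: val_inj; rewrite /= -divn_eq. Qed.

Lemma cell_eq i j i' j' : (cell i j == cell i' j') = (i == i') && (j == j').
Proof.
apply/eqP/andP => [e | [/eqP -> /eqP ->] //].
by split; apply/eqP; [have := congr1 row e | have := congr1 col e];
  rewrite ?row_cell ?col_cell.
Qed.

Definition block (k : 'I_a) : {set 'I_(a ^ 2)} := [set x | row x == k].

Lemma block_partitionE : block_partition a = [set block k | k : 'I_a].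
Proof. by []. Qed.

Lemma image_block (s : {perm 'I_(a ^ 2)}) x :
  preserves row s -> s @: block (row x) = block (row (s x)).
Proof.
move=> pres; apply/setP=> y; rewrite -[y](permKV s) mem_imset; last exact: perm_inj.
by rewrite !inE permKV -pres permKV.
Qed.

Lemma wreath_stabP (s : {perm 'I_(a ^ 2)}) :
  s \in wreath_stab a <-> preserves row s.
Proof.
rewrite inE block_partitionE; split => [/eqP stab x y | pres].
- have : s @: block (row x) \in [set block k | k : 'I_a].
    by rewrite -[in X in _ \in X]stab; apply: imset_f; apply: imset_f.
  case/imsetP=> k _ sBk.
  have mem_sB z : (s z \in s @: block (row x)) = (row z == row x).
    by rewrite mem_imset ?inE //; exact: perm_inj.
  have := mem_sB x; rewrite sBk inE eqxx => /eqP ->.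
  by rewrite eq_sym [row x == _]eq_sym -(mem_sB y) sBk inE.
- rewrite eqEcard (card_imset _ (imset_inj (@perm_inj _ s))) leqnn andbT.
  apply/subsetP=> _ /imsetP [_ /imsetP [k _ ->] ->].
  rewrite -[k](row_cell k k) image_block //; exact: imset_f.
Qed.

Lemma wreath_conjP (g s : {perm 'I_(a ^ 2)}) :
  s \in (wreath_stab a :^ g)%g <-> preserves (fun z => row ((g^-1)%g z)) s.
Proof. exact: mem_conj_stab wreath_stabP g s. Qed.

Lemma wreath_conj_meet (g1 g2 : {perm 'I_(a ^ 2)}) : 1 < a ->
  exists2 s : {perm 'I_(a ^ 2)}, s != 1%g &
    (s \in (wreath_stab a :^ g1)%g) && (s \in (wreath_stab a :^ g2)%g).
Proof.
move=> a_gt1.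
have [|||s ns [p1 p2]] := two_labellings_not_rigid
  (fun z => row ((g1^-1)%g z)) (fun z => row ((g2^-1)%g z)).
- by rewrite !card_ord -mulnn.
- by rewrite card_ord.
- by rewrite card_ord.
by exists s => //; apply/andP; split; apply/wreath_conjP.
Qed.

Lemma preserves_grid (s : {perm 'I_(a ^ 2)}) i j (o : 'I_a) :
  preserves row s -> preserves col s ->
  s (cell i j) = cell (row (s (cell i o))) (col (s (cell o j))).
Proof.
move=> pr pc; rewrite -[LHS]cellK; congr cell; apply/eqP.
- by rewrite pr !row_cell.
- by rewrite pc !col_cell.
Qed.

Lemma cell_tperm (i j i1 j1 i2 j2 : 'I_a) :
  tperm (cell i1 j1) (cell i2 j2) (cell i j) =
  cell (if (i == i1) && (j == j1) then i2 else if (i == i2) && (j == j2) then i1 else i)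
       (if (i == i1) && (j == j1) then j2 else if (i == i2) && (j == j2) then j1 else j).
Proof.
case: tpermP => [/eqP | /eqP | ]; rewrite ?cell_eq.
- by case/andP=> /eqP -> /eqP ->; rewrite !eqxx.
- by case/andP=> /eqP -> /eqP ->; case: ifP => [/andP [/eqP -> /eqP ->] | _]; rewrite ?eqxx.
- by move=> /eqP; rewrite cell_eq => /negbTE -> /eqP; rewrite cell_eq => /negbTE ->.
Qed.

Section ThreeConjugates.
Hypothesis a_gt2 : 2 < a.

Definition transpose (x : 'I_(a ^ 2)) := cell (col x) (row x).

Lemma transposeK : involutive transpose.
Proof. by move=> x; rewrite /transpose row_cell col_cell cellK. Qed.

Definition col_conj : {perm 'I_(a ^ 2)} := ((perm (inv_inj transposeK))^-1)%g.

Lemma row_col_conj x : row ((col_conj^-1)%g x) = col x.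
Proof. by rewrite invgK permE /transpose row_cell. Qed.

Let a_gt1 : 1 < a. Proof. exact: ltnW. Qed.
Definition o0 : 'I_a := Ordinal a_gt0.
Definition o1 : 'I_a := Ordinal a_gt1.
Definition o2 : 'I_a := Ordinal a_gt2.

Lemma cyclic_latin_lt (i j : 'I_a) : cyclic_latin a i j < a.
Proof. by have := ltn_ord i; have := ltn_ord j; rewrite /cyclic_latin; case: ifP; lia. Qed.

Definition shear (x : 'I_(a ^ 2)) : 'I_(a ^ 2) :=
  cell (Ordinal (cyclic_latin_lt (row x) (col x))) (row x).

Lemma shear_inj : injective shear.
Proof.
move=> x y /eqP; rewrite cell_eq => /andP [/eqP/(congr1 val) /= e /eqP erow].
rewrite -(cellK x) -(cellK y); congr cell => //; apply: val_inj; move: e.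
have /(congr1 val) /= erow' := erow; rewrite erow' /cyclic_latin.
have := ltn_ord (col x); have := ltn_ord (col y); have := ltn_ord (row y).
case: ifP; case: ifP; lia.
Qed.

(* The two cell swaps turning the cyclic Latin square into [latin]. *)
Definition cell_swap : {perm 'I_(a ^ 2)} :=
  (tperm (cell o0 o0) (cell o1 o0) * tperm (cell o0 o1) (cell o0 o2))%g.

Definition latin_conj : {perm 'I_(a ^ 2)} := ((cell_swap * perm shear_inj)^-1)%g.

Lemma row_latin_conj i j : val (row ((latin_conj^-1)%g (cell i j))) = latin a i j.
Proof.
rewrite invgK permM permE permM !cell_tperm /shear row_cell col_cell row_cell /=.
case: i j => [[|[|i]] lt_i] [[|[|[|j]]] lt_j]; rewrite /o0 /o1 /o2 -!val_eqE /=.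
all: rewrite /latin /cyclic_latin; repeat (case: ifP => /= ?); lia.
Qed.

Lemma latin_rigid (sigma tau : 'I_a -> 'I_a) :
  injective sigma -> injective tau ->
  (forall i j i' j' : 'I_a, latin a i j = latin a i' j' ->
     latin a (sigma i) (tau j) = latin a (sigma i') (tau j')) ->
  sigma =1 id /\ tau =1 id.
Proof.
move=> sigma_inj tau_inj compat.
pose ord_of n : 'I_a := insubd o0 n.
have ord_ofK n : n < a -> val (ord_of n) = n by move=> lt_n; rewrite val_insubd lt_n.
pose lift (f : 'I_a -> 'I_a) n := val (f (ord_of n)).
have liftK f (i : 'I_a) : lift f i = f i by rewrite /lift /ord_of valKd.
have lift_lt f n : n < a -> lift f n < a by move=> _; exact: ltn_ord.
have lift_inj f : injective f ->
    forall n n', n < a -> n' < a -> lift f n = lift f n' -> n = n'.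
  move=> f_inj n n' lt_n lt_n' /val_inj /f_inj /(congr1 val).
  by rewrite !ord_ofK.
have lift_compat n m n' m' : n < a -> m < a -> n' < a -> m' < a ->
    latin a n m = latin a n' m' ->
    latin a (lift sigma n) (lift tau m) = latin a (lift sigma n') (lift tau m').
  by move=> *; apply: compat; rewrite !ord_ofK.
have rows := rigid_rows a_gt2 (lift_lt sigma) (lift_lt tau)
  (lift_inj _ sigma_inj) (lift_inj _ tau_inj) lift_compat.
have cols := rigid_cols a_gt2 (lift_lt sigma) (lift_lt tau)
  (lift_inj _ sigma_inj) (lift_inj _ tau_inj) lift_compat.
by split=> i; apply: val_inj; rewrite /= -liftK ?rows ?cols.
Qed.

Lemma three_conj_trivial (s : {perm 'I_(a ^ 2)}) :
  s \in wreath_stab a -> s \in (wreath_stab a :^ col_conj)%g ->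
  s \in (wreath_stab a :^ latin_conj)%g -> s = 1%g.
Proof.
move=> /wreath_stabP pr /wreath_conjP pc' /wreath_conjP pl.
have pc : preserves col s by move=> x y; have := pc' x y; rewrite !row_col_conj.
pose sigma i := row (s (cell i o0)); pose tau j := col (s (cell o0 j)).
have s_cell i j : s (cell i j) = cell (sigma i) (tau j) by exact: preserves_grid.
have sigma_inj : injective sigma.
  by move=> i i' /eqP; rewrite pr !row_cell => /eqP.
have tau_inj : injective tau.
  by move=> j j' /eqP; rewrite pc !col_cell => /eqP.
have [|sigma1 tau1] := latin_rigid sigma_inj tau_inj.
  move=> i j i' j'; rewrite -!row_latin_conj -!s_cell => /val_inj /eqP.
  by rewrite -pl => /eqP ->.
apply/permP=> x; rewrite perm1 -[in LHS](cellK x) s_cell sigma1 tau1.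
exact: cellK.
Qed.

Definition three_conj : {set {perm 'I_(a ^ 2)}} := [set 1%g; col_conj; latin_conj].

Lemma card_three_conj : #|three_conj| = 3.
Proof.
have label_neq (g g' : {perm 'I_(a ^ 2)}) x :
    val (row ((g^-1)%g x)) != val (row ((g'^-1)%g x)) -> g != g'.
  by apply: contra => /eqP ->.
have n1c : (1%g : {perm 'I_(a ^ 2)}) != col_conj.
  by apply: (label_neq _ _ (cell o0 o1)); rewrite row_col_conj invg1 perm1 row_cell col_cell.
have n1l : (1%g : {perm 'I_(a ^ 2)}) != latin_conj.
  by apply: (label_neq _ _ (cell o0 o0)); rewrite row_latin_conj invg1 perm1 row_cell.
have ncl : col_conj != latin_conj.
  by apply: (label_neq _ _ (cell o0 o0)); rewrite row_latin_conj row_col_conj col_cell.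
by rewrite /three_conj -setUA cardsU1 cards2 ncl !inE negb_or n1c n1l.
Qed.

Lemma one_in_wreath_conj (g : {perm 'I_(a ^ 2)}) : 1%g \in (wreath_stab a :^ g)%g.
Proof. by apply/wreath_conjP; apply: preserves1. Qed.

Lemma cap_three_conj :
  \bigcap_(g in three_conj) (wreath_stab a :^ g)%g = [set 1%g].
Proof.
apply/setP=> s; rewrite inE; apply/bigcapP/eqP => [mem_s | -> g _].
  apply: three_conj_trivial; last (apply: mem_s; rewrite !inE eqxx ?orbT //).
  - by have := mem_s 1%g; rewrite conjsg1; apply; rewrite !inE eqxx.
  - by apply: mem_s; rewrite !inE eqxx ?orbT.
exact: one_in_wreath_conj.
Qed.

Lemma core_wreath : core [set: {perm 'I_(a ^ 2)}] (wreath_stab a) = [set 1%g].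
Proof.
apply/eqP; rewrite eqEsubset -{1}cap_three_conj core_sub_cap ?subsetT //=.
by rewrite sub1set; apply/bigcapP=> g _; exact: one_in_wreath_conj.
Qed.

End ThreeConjugates.

End Grid.

Theorem proposition2p6 (a : nat) :
  3 <= a ->
  base_size [set: {perm 'I_(a ^ 2)}] (wreath_stab a) = 3.
Proof.
move=> a_gt2; have a_gt0 : 0 < a by exact: ltn_trans a_gt2.
rewrite -(card_three_conj a_gt0 a_gt2); apply: base_sizeE.
- exact: subsetT.
- by rewrite cap_three_conj core_wreath.
move=> S _ capS; rewrite card_three_conj; apply: base_size_ge3 capS.
  exact: core_wreath.
by move=> g1 g2; exact: wreath_conj_meet a_gt0 g1 g2 (ltnW a_gt2).
Qed.
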